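(* For $i,j\in\mathbb{N}$ and $m,n\in\mathbb{N}_0$: (1) if $i\le j$ then $d_i(n)\le d_j(n)$; (2) if $i\le j$ and $d_j(m)=d_i(n)$, then $d_j(m)=d_i(m)$.
   Context: For $i\in\mathbb{N}$ and $n\in\mathbb{N}_0$, $d_i(n)=2^{i-1}-\left|(n\bmod 2^i)-2^{i-1}\right|$. *)

From mathcomp Require Import all_boot all_order all_algebra.
Import GRing.Theory Num.Theory.
Local Open Scope ring_scope.

(* d_i(n) = 2^(i-1) - | (n mod 2^i) - 2^(i-1) |, computed in int.
   Intended for i >= 1 (i in N = {1,2,...}), n in N_0. *)
Definition d (i n : nat) : int :=
  (2 ^ i.-1)%N%:Z - `| ((n %% 2 ^ i)%N%:Z - (2 ^ i.-1)%N%:Z) |.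

From mathcomp Require Import all_boot all_order all_algebra zify.
Import GRing.Theory Num.Theory.

Set Implicit Arguments.
Unset Strict Implicit.
Unset Printing Implicit Defensive.
Local Open Scope ring_scope.

(* d_i(n) is the distance from n to the nearest multiple of 2^i.  Since every
   multiple of 2^j is a multiple of 2^i, reducing modulo 2^j first does not
   change the distance to the multiples of 2^i; and a distance that is at most
   half of 2^i is its own distance to the multiples of 2^i.  Part (1) follows
   since the distance of x is at most x, part (2) since d_i(n) <= 2^(i-1). *)

Definition moddist (p n : nat) : nat := minn (n %% p) (p - n %% p).

Lemma moddist_le p n : (moddist p n <= n)%N.
Proof. exact: leq_trans (geq_minl _ _) (leq_mod _ _). Qed.

Lemma moddist_double_le p n : ((moddist p n).*2 <= p)%N.
Proof. rewrite /moddist; move: (n %% p)%N => r; lia. Qed.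

Lemma moddist_small p t : (t.*2 <= p)%N -> moddist p t = t.
Proof.
move=> t2p; have [->|t_gt0] := posnP t; first by rewrite /moddist mod0n min0n.
rewrite /moddist modn_small; lia.
Qed.

Lemma moddist_modn p q n : (p %| q)%N -> moddist p (n %% q) = moddist p n.
Proof. by move=> pq; rewrite /moddist (modn_dvdm n pq). Qed.

Lemma moddist_subl p q r : (0 < p)%N -> (p %| q)%N -> (r <= q)%N ->
  moddist p (q - r) = moddist p r.
Proof.
move=> p_gt0 pq rq; rewrite /moddist.
have : ((q - r) %% p + r %% p = 0 %[mod p])%N.
  by rewrite modnDm subnK // mod0n; apply/eqP.
have := ltn_mod (q - r) p; have := ltn_mod r p; rewrite p_gt0.
move: ((q - r) %% p)%N (r %% p)%N => a b b_lt a_lt sum_mod.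
(* [a + b] is a multiple of [p] below [2 p], hence [0] or [p]. *)
have [ab_lt|ab_ge] := ltnP (a + b) p.
  by move: sum_mod; rewrite mod0n modn_small //; lia.
move: sum_mod; rewrite mod0n -{1}(subnK ab_ge) modnDr modn_small; lia.
Qed.

Lemma moddist_dvd p q n : (0 < q)%N -> (p %| q)%N ->
  moddist p (moddist q n) = moddist p n.
Proof.
move=> q_gt0 pq; have p_gt0 := dvdn_gt0 q_gt0 pq.
rewrite -(moddist_modn n pq) [moddist q n]/moddist /minn.
case: ltnP => _ //.
by rewrite moddist_subl // ltnW // ltn_mod.
Qed.

Lemma d_moddist i n : (1 <= i)%N -> d i n = (moddist (2 ^ i) n)%:Z.
Proof.
move=> i_gt0; rewrite /d /moddist.
have two_i : (2 ^ i = 2 ^ i.-1 * 2)%N by rewrite -expnSr prednK.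
have := ltn_mod n (2 ^ i); rewrite expn_gt0 two_i /=.
move: (2 ^ i.-1)%N (n %% (2 ^ i.-1 * 2))%N => h r; lia.
Qed.

Theorem claim10 :
  (forall (i j n : nat), (1 <= i)%N -> (1 <= j)%N -> (i <= j)%N ->
     d i n <= d j n) /\
  (forall (i j m n : nat), (1 <= i)%N -> (1 <= j)%N -> (i <= j)%N ->
     d j m = d i n -> d j m = d i m).
Proof.
have pos2 k : (0 < 2 ^ k)%N by rewrite expn_gt0.
split=> [i j n hi hj ij | i j m n hi hj ij].
  rewrite !d_moddist // lez_nat -(moddist_dvd n (pos2 j) (dvdn_exp2l 2 ij)).
  exact: moddist_le.
rewrite !d_moddist // => /eqP; rewrite eqz_nat => /eqP dist_eq.
congr (_%:Z).
rewrite -(moddist_dvd m (pos2 j) (dvdn_exp2l 2 ij)) [RHS]moddist_small //.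
by rewrite dist_eq moddist_double_le.
Qed.
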